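(* For every $k\ge1$ one has $u_{k;0}=b$ and, for all $m\ge0$, $$(b^{m+1}-b+1)\,u_{k;m}=\sum_{j=1}^{m}\binom{m}{j}\Big(\sum_{\substack{0\le a<b\\ a\ne d}}a^j\Big)u_{k;m-j}+\sum_{j=0}^{m}\binom{m}{j}d^j\,u_{k-1;m-j},$$ with the convention $0^0=1$.
   Context: Fix $b\ge2$ and $d\in\{0,\dots,b-1\}$. A string is a finite sequence $X=(d_l,\dots,d_1)$ of digits in $\{0,\dots,b-1\}$ (leading zeros allowed), of length $|X|=l\ge0$; its value is $n(X)=\sum_{i=1}^{l}d_ib^{i-1}$ ($0$ for the empty string). For $k\ge0$, $\mu_k=\sum_{X}b^{-|X|}\delta_{n(X)/b^{|X|}}$, the sum over all strings $X$ containing $d$ exactly $k$ times; it is a finite measure on $[0,1)$ of total mass $b$. The moments are $u_{k;m}=\int_{[0,1)}x^m\,d\mu_k(x)$. *)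

From HB Require Import structures.
From mathcomp Require Import all_boot all_order all_algebra.
From mathcomp Require Import all_classical all_reals all_analysis.
Set Implicit Arguments. Unset Strict Implicit. Unset Printing Implicit Defensive.
Import Order.TTheory GRing.Theory Num.Theory.
Local Open Scope ring_scope.

(* A string of length l over the digits {0,...,b-1} is an l.-tuple 'I_b;
   position i (0-based) carries the digit d_{i+1}, of weight b^i. *)

Definition strpt (R : realType) (b l : nat) (X : l.-tuple 'I_b) : R :=
  (\sum_(i < l) (tnth X i)%:R * (b%:R) ^+ i) / (b%:R ^+ l).

Definition occ (b d l : nat) (X : l.-tuple 'I_b) : nat :=
  count (fun a : 'I_b => nat_of_ord a == d) X.

(* u_{k;m} = \int x^m d mu_k, mu_k = sum_X b^{-|X|} delta_{n(X)/b^|X|},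
   i.e. the (nonnegative, order independent) sum over all strings X with
   exactly k occurrences of d of  b^{-|X|} (n(X)/b^|X|)^m,
   grouped by length, valued in the extended reals. *)
Definition moment (R : realType) (b d k m : nat) : \bar R :=
  (\sum_(0 <= l <oo)
     (\sum_(X : l.-tuple 'I_b | occ d X == k)
        (((b%:R ^+ l)^-1 * (strpt R X) ^+ m)%:E)))%E.

From HB Require Import structures.
From mathcomp Require Import all_boot all_order all_algebra.
From mathcomp Require Import all_classical all_reals all_analysis.
From mathcomp Require Import ring lra.
Import Order.TTheory GRing.Theory Num.Theory.
Local Open Scope ring_scope.

(* Appending a most significant digit [a] to a string [Y] of length [l] sends its
   point [x] to [(a + x) / b] and its weight [b^-l] to [b^-(l+1)], and adds one
   occurrence of [d] exactly when [a = d].  Expanding [((a + x) / b)^m] binomially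
   and summing over [a] and over all lengths gives
     b^(m+1) u_{k;m} = [k = 0][m = 0] b + sum_j C(m,j) (sum_{a <> d} a^j) u_{k;m-j}
                       + [k > 0] sum_j C(m,j) d^j u_{k-1;m-j}.
   Its [j = 0] term [(b - 1) u_{k;m}] can be cancelled because [u_{k;m} <= u_{k;0}]
   and the same recurrence on partial sums of masses bounds [u_{k;0}] by [b]; for
   [m = 0] the recurrence then forces [u_{k;0} = b]. *)

Lemma big_tuple_rcons (V : nmodType) (T : finType) (l : nat)
    (P : pred ((l.+1).-tuple T)) (f : (l.+1).-tuple T -> V) :
  \sum_(X | P X) f X =
  \sum_(a : T) \sum_(Y : l.-tuple T | P [tuple of rcons Y a]) f [tuple of rcons Y a].
Proof.
pose h (p : T * l.-tuple T) := [tuple of rcons p.2 p.1].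
have h_inj : injective h.
  by move=> [a Y] [a' Y'] /(congr1 val)/rcons_inj[/val_inj-> ->].
have h_bij : bijective h.
  by apply: inj_card_bij h_inj _; rewrite card_prod !card_tuple expnS.
by rewrite pair_big_dep (reindex h) //=; exact: onW_bij.
Qed.

Section Strings.
Variables (R : realType) (b d : nat).

Lemma occ_rcons l (Y : l.-tuple 'I_b) (a : 'I_b) :
  occ d [tuple of rcons Y a] = (occ d Y + (nat_of_ord a == d))%N.
Proof. by rewrite /occ /= -cats1 count_cat /= addn0. Qed.

Lemma strpt_nil (X : 0.-tuple 'I_b) : strpt R X = 0.
Proof. by rewrite /strpt big_ord0 mul0r. Qed.

Lemma strpt_rcons l (Y : l.-tuple 'I_b) (a : 'I_b) :
  strpt R [tuple of rcons Y a] = (a%:R + strpt R Y) / b%:R.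
Proof.
have b_gt0 : (0 < b)%N := leq_ltn_trans (leq0n a) (ltn_ord a).
have bNZ : (b%:R : R) != 0 by rewrite pnatr_eq0 -lt0n.
rewrite /strpt big_ord_recr /= (tnth_nth a) nth_rcons size_tuple ltnn eqxx.
under eq_bigr => i _ do
  rewrite (tnth_nth a) /= nth_rcons size_tuple ltn_ord -tnth_nth.
by rewrite exprSr; field; rewrite bNZ expf_neq0.
Qed.

Lemma strpt_ge0 l (X : l.-tuple 'I_b) : 0 <= strpt R X.
Proof.
by rewrite /strpt divr_ge0 ?exprn_ge0 // sumr_ge0 // => i _;
  rewrite mulr_ge0 ?exprn_ge0.
Qed.

(* [n(X) <= sum_i (b - 1) b^i = b^l - 1]. *)
Lemma strpt_le1 l (X : l.-tuple 'I_b) : strpt R X <= 1.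
Proof.
case: l X => [|l] X; first by rewrite strpt_nil.
have b_gt0 : (0 < b)%N := leq_ltn_trans (leq0n _) (ltn_ord (tnth X ord0)).
rewrite /strpt ler_pdivrMr ?exprn_gt0 ?ltr0n // mul1r.
have geom n : \sum_(i < n) ((b%:R : R) - 1) * b%:R ^+ i = b%:R ^+ n - 1.
  elim: n => [|n IH]; first by rewrite big_ord0 expr0 subrr.
  by rewrite big_ord_recr /= IH exprS; ring.
apply: (@le_trans _ _ (b%:R ^+ l.+1 - 1)); last by rewrite lerBlDr lerDl.
rewrite -geom; apply: ler_sum => i _; apply: ler_wpM2r; first by rewrite exprn_ge0.
by rewrite lerBrDr natr1 ler_nat ltn_ord.
Qed.

Definition moment_len k l m : R :=
  \sum_(X : l.-tuple 'I_b | occ d X == k) ((b%:R ^+ l)^-1 * strpt R X ^+ m).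

Definition digit_powsum j : R := \sum_(a < b | nat_of_ord a != d) a%:R ^+ j.

Lemma moment_len_nil k m : moment_len k 0 m = ((k == 0%N) && (m == 0%N))%:R.
Proof.
rewrite /moment_len big_mkcond (big_pred1 [tuple]) => [|X]; last first.
  by rewrite /= tuple0; apply/esym/eqP.
rewrite /= eq_sym strpt_nil expr0 invr1 mul1r expr0n.
by case: (k == 0%N) (m == 0%N) => -[].
Qed.

Lemma moment_len_ge0 k l m : 0 <= moment_len k l m.
Proof.
by apply: sumr_ge0 => X _; rewrite mulr_ge0 ?invr_ge0 ?exprn_ge0 ?strpt_ge0.
Qed.

Lemma moment_len_le_mass k l m : moment_len k l m <= moment_len k l 0.
Proof.
apply: ler_sum => X _; rewrite expr0 ler_wpM2l ?invr_ge0 ?exprn_ge0 //.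
by rewrite exprn_ile1 ?strpt_ge0 ?strpt_le1.
Qed.

Lemma moment_len_translate k l m (a : R) :
  \sum_(Y : l.-tuple 'I_b | occ d Y == k) (b%:R ^+ l)^-1 * (a + strpt R Y) ^+ m
  = \sum_(j < m.+1) 'C(m, j)%:R * a ^+ j * moment_len k l (m - j).
Proof.
under [RHS]eq_bigr do rewrite mulr_sumr.
rewrite exchange_big /=; apply: eq_bigr => Y _.
rewrite addrC exprDn mulr_sumr; apply: eq_bigr => j _.
by rewrite -mulr_natl; ring.
Qed.

Lemma digit_powsum_ge0 j : 0 <= digit_powsum j.
Proof. by apply: sumr_ge0 => a _; rewrite exprn_ge0. Qed.

Hypothesis d_lt_b : (d < b)%N.

Lemma digit_powsum0 : digit_powsum 0 = b%:R - 1.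
Proof.
rewrite /digit_powsum (eq_bigl (predC1 (Ordinal d_lt_b))) => [|a]; last first.
  by rewrite /= -val_eqE.
rewrite (eq_bigr (fun=> 1)) // sumr_const cardC1 card_ord.
by rewrite -[b in RHS](prednK (leq_ltn_trans (leq0n d) d_lt_b)) -natr1 addrK.
Qed.

Lemma moment_len_succ k l m :
  b%:R ^+ m.+1 * moment_len k l.+1 m =
  \sum_(j < m.+1) 'C(m, j)%:R * digit_powsum j * moment_len k l (m - j)
  + (0 < k)%N%:R * \sum_(j < m.+1) 'C(m, j)%:R * d%:R ^+ j * moment_len k.-1 l (m - j).
Proof.
have bNZ : (b%:R : R) != 0.
  by rewrite pnatr_eq0 -lt0n (leq_ltn_trans (leq0n d) d_lt_b).
have rescale (a x : R) : b%:R ^+ m.+1 * ((b%:R ^+ l.+1)^-1 * ((a + x) / b%:R) ^+ m)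
    = (b%:R ^+ l)^-1 * (a + x) ^+ m.
  by rewrite expr_div_n !exprS; field; rewrite !expf_neq0.
rewrite [moment_len _ l.+1 _]/moment_len big_tuple_rcons mulr_sumr.
under eq_bigr => a _.
  rewrite mulr_sumr; under eq_bigr => Y _ do rewrite strpt_rcons rescale.
  over.
rewrite (bigD1 (Ordinal d_lt_b)) //= addrC; congr (_ + _).
  under [RHS]eq_bigr do rewrite /digit_powsum mulrAC mulr_sumr.
  rewrite exchange_big /= (eq_bigl (fun a : 'I_b => nat_of_ord a != d)) => [|a]; last first.
    by rewrite -val_eqE.
  apply: eq_bigr => a a_neq_d; under [RHS]eq_bigr do rewrite mulrAC.
  rewrite -moment_len_translate.
  by apply: eq_bigl => Y; rewrite occ_rcons (negbTE a_neq_d) addn0.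
case: k => [|k]; first by rewrite mul0r big_pred0 // => Y; rewrite occ_rcons eqxx addn1.
rewrite mul1r -moment_len_translate.
by apply: eq_bigl => Y; rewrite occ_rcons eqxx addn1 eqSS.
Qed.

Lemma moment_len_mass_succ k l :
  b%:R * moment_len k l.+1 0
  = (b%:R - 1) * moment_len k l 0 + (0 < k)%N%:R * moment_len k.-1 l 0.
Proof.
by rewrite -[b%:R]expr1 moment_len_succ !big_ord1 digit_powsum0 bin0 !expr0 !mul1r.
Qed.

(* Multiplying by [b] and using [moment_len_mass_succ], [b * S_k(n+1)] is at most
   [b * [k = 0] + (b - 1) * S_k(n) + [k > 0] * S_(k-1)(n) <= b^2]. *)
Lemma sum_moment_len_mass_le n k : \sum_(l < n) moment_len k l 0 <= b%:R.
Proof.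
have b_ge1 : (1 <= b)%N := leq_ltn_trans (leq0n d) d_lt_b.
have b_gt0 : (0 : R) < b%:R by rewrite ltr0n.
elim: n k => [|n IH] k; first by rewrite big_ord0.
rewrite -(ler_pM2l b_gt0) big_ord_recl moment_len_nil andbT mulrDr mulr_sumr.
under eq_bigr do rewrite lift0 moment_len_mass_succ.
rewrite big_split /= -!mulr_sumr.
have := ler_wpM2l (_ : 0 <= b%:R - 1) (IH k); rewrite subr_ge0 ler1n => /(_ b_ge1).
case: k => [|k] /=; first by rewrite mul0r; lra.
by rewrite mul1r; have := IH k; lra.
Qed.
End Strings.

Local Open Scope ereal_scope.

Lemma nneseries_sumZl (R : realType) n (c : 'I_n -> R) (f : 'I_n -> nat -> R) :
  (forall j, (0 <= c j)%R) -> (forall j l, (0 <= f j l)%R) ->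
  \sum_(0 <= l <oo) (\sum_(j < n) c j * f j l)%:E
  = \sum_(j < n) (c j)%:E * \sum_(0 <= l <oo) (f j l)%:E.
Proof.
move=> c_ge0 f_ge0; under eq_eseriesr do rewrite -sumEFin.
rewrite nneseries_sum => [|j l _]; last by rewrite lee_fin mulr_ge0.
apply: eq_bigr => j _; under eq_eseriesr do rewrite EFinM.
by rewrite nneseriesZl // => l _; rewrite lee_fin.
Qed.

Section Moments.
Variables (R : realType) (b d : nat).
Hypothesis d_lt_b : (d < b)%N.

Lemma moment_seriesE k m :
  moment R b d k m = \sum_(0 <= l <oo) (moment_len R b d k l m)%:E.
Proof. by apply: eq_eseriesr => l _; rewrite sumEFin. Qed.

Lemma moment_ge0 k m : 0 <= moment R b d k m.
Proof.
by rewrite moment_seriesE nneseries_ge0 // => l _ _; rewrite lee_fin moment_len_ge0.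
Qed.

Lemma moment_mass_le k : moment R b d k 0 <= b%:R%:E.
Proof.
rewrite moment_seriesE; apply: lime_le.
  by apply: is_cvg_nneseries => l _ _; rewrite lee_fin moment_len_ge0.
by apply: nearW => n; rewrite /= sumEFin big_mkord lee_fin sum_moment_len_mass_le.
Qed.

Lemma moment_fin_num k m : moment R b d k m \is a fin_num.
Proof.
rewrite ge0_fin_numE ?moment_ge0 //; apply: (le_lt_trans _ (ltry b%:R)).
apply: le_trans (moment_mass_le k); rewrite !moment_seriesE.
by apply: lee_nneseries => l _; rewrite lee_fin ?moment_len_ge0 ?moment_len_le_mass.
Qed.

Lemma moment_shift_recurrence k m :
  (b%:R ^+ m.+1)%:E * \sum_(0 <= l <oo) (moment_len R b d k l.+1 m)%:E =
  \sum_(j < m.+1) ('C(m, j)%:R * digit_powsum R b d j)%:E * moment R b d k (m - j)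
  + ((0 < k)%N%:R)%:E
    * \sum_(j < m.+1) ('C(m, j)%:R * d%:R ^+ j)%:E * moment R b d k.-1 (m - j).
Proof.
have succE l : (b%:R ^+ m.+1)%:E * (moment_len R b d k l.+1 m)%:E
    = (\sum_(j < m.+1) 'C(m, j)%:R * digit_powsum R b d j * moment_len R b d k l (m - j))%:E
    + ((0 < k)%N%:R)%:E
      * (\sum_(j < m.+1) 'C(m, j)%:R * d%:R ^+ j * moment_len R b d k.-1 l (m - j))%:E.
  by rewrite -EFinM moment_len_succ // EFinD EFinM.
have A_ge0 l : 0 <= (\sum_(j < m.+1)
    'C(m, j)%:R * digit_powsum R b d j * moment_len R b d k l (m - j))%:E.
  by rewrite lee_fin sumr_ge0 // => j _; rewrite !mulr_ge0 ?digit_powsum_ge0 ?moment_len_ge0.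
have B_ge0 l : 0 <= (\sum_(j < m.+1)
    'C(m, j)%:R * d%:R ^+ j * moment_len R b d k.-1 l (m - j))%:E.
  by rewrite lee_fin sumr_ge0 // => j _; rewrite !mulr_ge0 ?exprn_ge0 ?moment_len_ge0.
rewrite -nneseriesZl => [|l _]; last by rewrite lee_fin moment_len_ge0.
rewrite (eq_eseriesr (fun l _ => succE l)) nneseriesD => [|l _ _|l _ _]; last 2 first.
- exact: A_ge0.
- by rewrite mule_ge0 ?lee0n.
rewrite nneseriesZl => [|l _]; last exact: B_ge0.
rewrite (@nneseries_sumZl R _ (fun j : 'I_m.+1 => 'C(m, j)%:R * digit_powsum R b d j)%R
  (fun j l => moment_len R b d k l (m - j))) => [|j|j l]; first last.
- exact: moment_len_ge0.
- by rewrite mulr_ge0 ?digit_powsum_ge0.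
rewrite (@nneseries_sumZl R _ (fun j : 'I_m.+1 => 'C(m, j)%:R * d%:R ^+ j)%R
  (fun j l => moment_len R b d k.-1 l (m - j))) => [|j|j l]; first last.
- exact: moment_len_ge0.
- by rewrite mulr_ge0 ?exprn_ge0.
by congr (_ + _ * _); apply: eq_bigr => j _; rewrite moment_seriesE.
Qed.

Lemma moment_recurrence k m :
  (b%:R ^+ m.+1)%:E * moment R b d k m =
  (b%:R ^+ m.+1 * moment_len R b d k 0 m)%:E
  + \sum_(j < m.+1) ('C(m, j)%:R * digit_powsum R b d j)%:E * moment R b d k (m - j)
  + ((0 < k)%N%:R)%:E
    * \sum_(j < m.+1) ('C(m, j)%:R * d%:R ^+ j)%:E * moment R b d k.-1 (m - j).
Proof.
have len_ge0 l : 0 <= (moment_len R b d k l m)%:E by rewrite lee_fin moment_len_ge0.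
rewrite moment_seriesE nneseries_recl // -nneseries_addn //.
under eq_eseriesr do rewrite addn1.
rewrite ge0_muleDr //; last by rewrite nneseries_ge0.
by rewrite -EFinM -addeA moment_shift_recurrence.
Qed.

Definition rmoment k m : R := fine (moment R b d k m).

Lemma momentE k m : moment R b d k m = (rmoment k m)%:E.
Proof. by rewrite fineK ?moment_fin_num. Qed.

Local Open Scope ring_scope.

Lemma rmoment_recurrence k m :
  b%:R ^+ m.+1 * rmoment k m =
  b%:R ^+ m.+1 * moment_len R b d k 0 m
  + \sum_(j < m.+1) 'C(m, j)%:R * digit_powsum R b d j * rmoment k (m - j)
  + (0 < k)%N%:R * \sum_(j < m.+1) 'C(m, j)%:R * d%:R ^+ j * rmoment k.-1 (m - j).
Proof.
apply: EFin_inj; rewrite EFinM -momentE moment_recurrence !EFinD.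
congr (_ + _ + _).
  by rewrite -sumEFin; apply: eq_bigr => j _; rewrite EFinM momentE.
rewrite EFinM -sumEFin; congr (_ * _)%E.
by apply: eq_bigr => j _; rewrite EFinM momentE.
Qed.

Lemma rmoment_mass k : rmoment k 0 = b%:R.
Proof.
have mass_rec n : b%:R * rmoment n 0
    = b%:R * (n == 0%N)%:R + (b%:R - 1) * rmoment n 0 + (0 < n)%N%:R * rmoment n.-1 0.
  have := rmoment_recurrence n 0; rewrite moment_len_nil andbT !big_ord1 expr1.
  by rewrite digit_powsum0 // bin0 !expr0 !mul1r subn0.
elim: k => [|k IH]; [have := mass_rec 0%N | have := mass_rec k.+1] => /=.
  by rewrite mulr1 mul0r addr0; lra.
by rewrite mulr0 mul1r add0r IH; lra.
Qed.
End Moments.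

Theorem mainTheorem10 (R : realType) (b d : nat) (hb : (2 <= b)%N) (hd : (d < b)%N)
  (k : nat) (hk : (1 <= k)%N) :
  moment R b d k 0 = (b%:R)%:E /\
  forall m : nat,
    (((b%:R ^+ m.+1 - b%:R + 1 : R)%:E * moment R b d k m)
     = \sum_(j < m.+1 | (0 < j)%N)
          ((('C(m, j))%:R * \sum_(a < b | nat_of_ord a != d) (a%:R : R) ^+ j)%:E
             * moment R b d k (m - j)%N)
       + \sum_(j < m.+1)
          ((('C(m, j))%:R * (d%:R : R) ^+ j)%:E * moment R b d (k.-1) (m - j)%N))%E.
Proof.
split=> [|m]; first by rewrite momentE // rmoment_mass.
case: k hk => [//|k] _.
rewrite !momentE // -EFinM.
under eq_bigr do rewrite momentE // -EFinM.
under [X in (_ + X)%E]eq_bigr do rewrite momentE // -EFinM.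
rewrite !sumEFin -EFinD; congr EFin.
under eq_bigr => j _ do rewrite -/(digit_powsum R b d j).
rewrite (eq_bigl (fun j : 'I_m.+1 => j != ord0)) => [|j]; last by rewrite -lt0n.
have := rmoment_recurrence R b d hd k.+1 m.
rewrite moment_len_nil mulr0 add0r mul1r (bigD1 ord0) //= bin0 mul1r.
rewrite digit_powsum0 // subn0 => rec.
by rewrite mulrDl mulrBl mul1r rec; ring.
Qed.
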